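(* Let $(\mathcal V,\mathcal W,\lambda)$ be a FTvN system with center $C$. Then: (a) For every $x\in\mathcal V$, $C(x)$ is a closed convex cone, and $[x]\cap C(x)=\{x\}$. (b) If $\lambda(x)=-\lambda(y)$ for some $x,y\in\mathcal V$, then $x=-y$ and $x,y\in C$. (c) $C$ is a closed linear subspace of $\mathcal V$ and $\lambda$ is linear on $C$. (d) $C=\{x\in\mathcal V:\lambda(-x)=-\lambda(x)\}$. (e) If $x$ and $-x$ commute, then $x\in C$. Consequently $C=\{x\in\mathcal V: x \text{ and } -x \text{ commute}\}$.
   Context: A Fan-Theobald-von Neumann (FTvN) system is a triple $(\mathcal V,\mathcal W,\lambda)$ where $\mathcal V,\mathcal W$ are real inner product spaces and $\lambda:\mathcal V\to\mathcal W$ is a map such that: (A1) $\|\lambda(x)\|=\|x\|$ for all $x$; (A2) $\langle x,y\rangle\le\langle\lambda(x),\lambda(y)\rangle$ for all $x,y$; (A3) for every $c\in\mathcal V$ and $q\in\lambda(\mathcal V)$ there exists $x$ with $\lambda(x)=q$ and $\langle c,x\rangle=\langle\lambda(c),\lambda(x)\rangle$. The $\lambda$-orbit of $u$ is $[u]=\{x:\lambda(x)=\lambda(u)\}$. Elements $x,y$ commute if $\langle x,y\rangle=\langle\lambda(x),\lambda(y)\rangle$. For $x\in\mathcal V$, $C(x)=\{y\in\mathcal V: y \text{ commutes with } x\}$, and the center of the system is $C=\bigcap_{x\in\mathcal V}C(x)$. *)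

From HB Require Import structures.
From mathcomp Require Import all_boot all_order all_algebra.
From mathcomp Require Import reals.
Set Implicit Arguments. Unset Strict Implicit. Unset Printing Implicit Defensive.
Import Order.TTheory GRing.Theory Num.Theory.
Local Open Scope ring_scope.

Section FTvN.
Variable R : realType.

Definition is_inner_product (V : lmodType R) (ip : V -> V -> R) : Prop :=
  [/\ (forall x y, ip x y = ip y x),
      (forall (a : R) x y z, ip (a *: x + y) z = a * ip x z + ip y z),
      (forall x, 0 <= ip x x) &
      (forall x, ip x x = 0 -> x = 0)].

Definition ipnorm (V : lmodType R) (ip : V -> V -> R) (x : V) : R :=
  Num.sqrt (ip x x).

Variables (V W : lmodType R) (ipV : V -> V -> R) (ipW : W -> W -> R)
  (lam : V -> W).

Definition FTvN_system : Prop :=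
  [/\ (forall x, ipnorm ipW (lam x) = ipnorm ipV x),
      (forall x y, ipV x y <= ipW (lam x) (lam y)) &
      (forall (c : V) (q : W), (exists v, lam v = q) ->
         exists x, lam x = q /\ ipV c x = ipW (lam c) (lam x))].

Definition lam_orbit (u : V) : V -> Prop := fun x => lam x = lam u.

Definition lam_commute (x y : V) : Prop := ipV x y = ipW (lam x) (lam y).

Definition commutant (x : V) : V -> Prop := fun y => lam_commute y x.

Definition center : V -> Prop := fun y => forall x, commutant x y.

Definition closed_set (S : V -> Prop) : Prop :=
  forall x, ~ S x -> exists e : R, 0 < e /\
     forall y, ipnorm ipV (y - x) < e -> ~ S y.

Definition convex_set (S : V -> Prop) : Prop :=
  forall x y (t : R), S x -> S y -> 0 <= t <= 1 -> S (t *: x + (1 - t) *: y).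

Definition cone (S : V -> Prop) : Prop :=
  forall (t : R) x, 0 <= t -> S x -> S (t *: x).

Definition convex_cone (S : V -> Prop) : Prop := convex_set S /\ cone S.

Definition linear_subspace (S : V -> Prop) : Prop :=
  [/\ S 0, (forall x y, S x -> S y -> S (x + y)) &
      (forall (a : R) x, S x -> S (a *: x))].

Definition linear_on (S : V -> Prop) : Prop :=
  forall (a b : R) x y, S x -> S y -> lam (a *: x + b *: y) = a *: lam x + b *: lam y.

End FTvN.

From HB Require Import structures.
From mathcomp Require Import all_boot all_order all_algebra.
From mathcomp Require Import reals.
From mathcomp Require Import lra.
From Stdlib Require Import Classical.
Import Order.TTheory GRing.Theory Num.Theory.
Local Open Scope ring_scope.
Set Implicit Arguments. Unset Strict Implicit.

(* By (A1) and (A2), every identity <x, y> = <lam x, lam y> is the equality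
   case of an inequality, so most claims reduce to showing that some squared
   norm is <= 0.  Commutants are closed under sums because (A3) lets one
   replace x by an element of its orbit commuting with the sum; the same
   device gives a continuous lower bound for the defect
   <lam y, lam x> - <y, x>, whence closedness.  If lam x = - lam y then
   |x + y|^2 <= |lam x + lam y|^2 = 0, so x = - y, and the two inequalities
   <x, z> <= <lam x, lam z> and <-x, z> <= <-lam x, lam z> force equality:
   x is central.  Thus C = {x | lam (-x) = - lam x}; it is a subspace, and
   lam is linear on it because lam (a x + b y) - a lam x - b lam y is
   orthogonal to lam c for every central c, in particular to itself. *)

Section InnerProduct.
Variables (R : realType) (V : lmodType R) (ip : V -> V -> R).
Hypothesis hip : is_inner_product ip.

Lemma ipC x y : ip x y = ip y x.
Proof. by case: hip. Qed.

Lemma ipDl x y z : ip (x + y) z = ip x z + ip y z.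
Proof. by case: hip => _ hl _ _; have := hl 1 x y z; rewrite scale1r mul1r. Qed.

Lemma ip0l z : ip 0 z = 0.
Proof. by have := ipDl 0 0 z; rewrite addr0; lra. Qed.

Lemma ipZl a x z : ip (a *: x) z = a * ip x z.
Proof. by case: hip => _ hl _ _; rewrite -[a *: x]addr0 hl ip0l addr0. Qed.

Lemma ipNl x z : ip (- x) z = - ip x z.
Proof. by rewrite -scaleN1r ipZl mulN1r. Qed.

Lemma ipBl x y z : ip (x - y) z = ip x z - ip y z.
Proof. by rewrite ipDl ipNl. Qed.

Lemma ipDr x y z : ip z (x + y) = ip z x + ip z y.
Proof. by rewrite !(ipC z) ipDl. Qed.

Lemma ipZr a x z : ip z (a *: x) = a * ip z x.
Proof. by rewrite !(ipC z) ipZl. Qed.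

Lemma ipNr x z : ip z (- x) = - ip z x.
Proof. by rewrite !(ipC z) ipNl. Qed.

Lemma ipBr x y z : ip z (x - y) = ip z x - ip z y.
Proof. by rewrite !(ipC z) ipBl. Qed.

Lemma ipDD x y : ip (x + y) (x + y) = ip x x + 2 * ip x y + ip y y.
Proof. by rewrite ipDl !ipDr (ipC y x); lra. Qed.

Lemma ipBB x y : ip (x - y) (x - y) = ip x x - 2 * ip x y + ip y y.
Proof. by rewrite ipBl !ipBr (ipC y x); lra. Qed.

Lemma ip_ge0 x : 0 <= ip x x.
Proof. by case: hip. Qed.

Lemma ip_le0_eq0 x : ip x x <= 0 -> x = 0.
Proof. by case: hip => _ _ _ hd hx; apply: hd; apply/eqP; rewrite eq_le hx ip_ge0. Qed.

Lemma ip_CauchySchwarz x y : ip x y <= ipnorm ip x * ipnorm ip y.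
Proof.
have [x0 | xx_gt0] := eqVneq (ip x x) 0.
  by rewrite (@ip_le0_eq0 x) ?x0 // ip0l mulr_ge0 ?sqrtr_ge0.
have {}xx_gt0 : 0 < ip x x by rewrite lt_def xx_gt0 ip_ge0.
(* the square of [ip x x *: y - ip x y *: x] is [ip x x * (ip x x * ip y y - ip x y ^+ 2)] *)
have sq_le : ip x y ^+ 2 <= ip x x * ip y y.
  have := ip_ge0 (ip x x *: y - ip x y *: x).
  rewrite ipBB !ipZl !ipZr (ipC y x).
  have -> : ip x x * (ip x x * ip y y) - 2 * (ip x x * (ip x y * ip x y))
            + ip x y * (ip x y * ip x x) = ip x x * (ip x x * ip y y - ip x y ^+ 2).
    by rewrite expr2; lra.
  by rewrite pmulr_rge0 // subr_ge0.
rewrite /ipnorm -sqrtrM ?ip_ge0 //; apply: le_trans (ler_norm _) _.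
by rewrite -sqrtr_sqr ler_sqrt // mulr_ge0 ?ip_ge0.
Qed.

Lemma closed_set_bigcap (I : Type) (S : I -> V -> Prop) :
  (forall i, closed_set ip (S i)) -> closed_set ip (fun y => forall i, S i y).
Proof.
move=> closedS y notSy; have [i notSiy] := not_all_ex_not _ _ notSy.
have [e [e_gt0 He]] := closedS i y notSiy.
by exists e; split=> // z zy Sz; exact: He z zy (Sz i).
Qed.

End InnerProduct.

Section FTvNSystem.
Variables (R : realType) (V W : lmodType R).
Variables (ipV : V -> V -> R) (ipW : W -> W -> R) (lam : V -> W).
Hypotheses (hV : is_inner_product ipV) (hW : is_inner_product ipW).
Hypothesis hF : FTvN_system ipV ipW lam.

Local Notation commute := (lam_commute ipV ipW lam).
Local Notation commutant := (commutant ipV ipW lam).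
Local Notation center := (center ipV ipW lam).

Lemma ip_lam x : ipW (lam x) (lam x) = ipV x x.
Proof.
case: hF => norm_lam _ _; have := congr1 (fun r => r ^+ 2) (norm_lam x).
by rewrite /ipnorm /= !sqr_sqrtr ?ip_ge0.
Qed.

Lemma ip_le_lam x y : ipV x y <= ipW (lam x) (lam y).
Proof. by case: hF. Qed.

Lemma commute_in_orbit c x : exists2 w, lam w = lam x & commute c w.
Proof.
case: hF => _ _ hA3; have [w [lam_w cw]] := hA3 c (lam x) (ex_intro _ x erefl).
by exists w.
Qed.

Lemma lam0 : lam 0 = 0.
Proof. by apply: (ip_le0_eq0 hW); rewrite ip_lam ip0l. Qed.

Lemma lamZ_ge0 t x : 0 <= t -> lam (t *: x) = t *: lam x.
Proof.
move=> t_ge0; apply/eqP; rewrite -subr_eq0; apply/eqP; apply: (ip_le0_eq0 hW).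
rewrite (ipBB hW) (ipZr hW) (ipZl hW) (ipZr hW) !ip_lam (ipZl hV) (ipZr hV).
have := ler_wpM2l t_ge0 (ip_le_lam (t *: x) x); rewrite (ipZl hV); lra.
Qed.

Lemma commutantD x y z : commutant x y -> commutant x z -> commutant x (y + z).
Proof.
rewrite /commutant /lam_commute => cy cz.
have [w lam_w cw] := commute_in_orbit (y + z) x.
apply/eqP; rewrite eq_le ip_le_lam /= -lam_w -cw !(ipDl hV) cy cz -lam_w.
by apply: lerD; apply: ip_le_lam.
Qed.

Lemma commutantZ x t y : 0 <= t -> commutant x y -> commutant x (t *: y).
Proof.
by move=> t_ge0 cy; rewrite /commutant /lam_commute lamZ_ge0 // (ipZl hV) (ipZl hW) cy.
Qed.

Lemma commutant_convex_cone x : convex_cone (commutant x).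
Proof.
split=> [y z t cy cz /andP[t_ge0 t_le1] | t y t_ge0 cy]; last exact: commutantZ.
by apply: commutantD; apply: commutantZ => //; rewrite subr_ge0.
Qed.

Lemma commutant_closed x : closed_set ipV (commutant x).
Proof.
(* For [w] in the orbit of [x] commuting with [y0], the gap
   [ipW (lam y) (lam x) - ipV y x] is bounded below by the continuous
   function [ipV y (w - x)], which equals the gap at [y0]. *)
move=> y0 not_cy0; have [w lam_w cy0w] := commute_in_orbit y0 x.
set d := ipW (lam y0) (lam x) - ipV y0 x.
have d_gt0 : 0 < d.
  by rewrite subr_gt0 lt_def ip_le_lam andbT; apply/eqP => /esym.
set n := ipnorm ipV (x - w).
have n_ge0 : 0 <= n by exact: sqrtr_ge0.
have n1_gt0 : 0 < n + 1 by lra.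
exists (d / (n + 1)); split=> [|y y_near cy]; first exact: divr_gt0.
have gap : d <= ipV (y - y0) (x - w).
  rewrite (ipBl hV) !(ipBr hV) cy0w lam_w cy /d.
  by have := ip_le_lam y w; rewrite lam_w; lra.
have : ipV (y - y0) (x - w) < d.
  apply: le_lt_trans (ip_CauchySchwarz hV _ _) _; rewrite -/n.
  apply: le_lt_trans (ler_wpM2r n_ge0 (ltW y_near)) _.
  by rewrite -[X in _ < X](divfK (lt0r_neq0 n1_gt0)) ltr_pM2l ?divr_gt0 //; lra.
lra.
Qed.

Lemma orbit_commutant x y : lam_orbit lam x y /\ commutant x y <-> y = x.
Proof.
split=> [[lam_y cy] | ->]; last by split=> //; rewrite /commutant /lam_commute ip_lam.
apply/eqP; rewrite -subr_eq0; apply/eqP; apply: (ip_le0_eq0 hV).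
by rewrite (ipBB hV) cy -!ip_lam lam_y; lra.
Qed.

Lemma eq_oppr_of_lam x y : lam x = - lam y -> x = - y.
Proof.
move=> lam_xy; apply/eqP; rewrite -addr_eq0; apply/eqP; apply: (ip_le0_eq0 hV).
rewrite (ipDD hV) -!ip_lam lam_xy (ipNl hW) (ipNr hW) opprK.
by have := ip_le_lam x y; rewrite lam_xy (ipNl hW); lra.
Qed.

Lemma center_of_lamN x y : lam x = - lam y -> center x.
Proof.
move=> lam_xy z; rewrite /commutant /lam_commute.
have y_eq : y = - x by rewrite (eq_oppr_of_lam lam_xy) opprK.
have lam_y : lam y = - lam x by rewrite lam_xy opprK.
apply/eqP; rewrite eq_le ip_le_lam /=.
by have := ip_le_lam y z; rewrite {1}y_eq lam_y (ipNl hV) (ipNl hW); lra.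
Qed.

Lemma lamN_of_commute x : commute x (- x) -> lam (- x) = - lam x.
Proof.
move=> cxN; apply/eqP; rewrite -addr_eq0; apply/eqP; apply: (ip_le0_eq0 hW).
rewrite (ipDD hW) !ip_lam (ipC hW) -cxN !(ipNl hV) !(ipNr hV) opprK; lra.
Qed.

Lemma centerP x : center x <-> lam (- x) = - lam x.
Proof.
split=> [cx | lamN]; first exact/lamN_of_commute/cx.
by apply: (@center_of_lamN x (- x)); rewrite lamN opprK.
Qed.

Lemma center_commuteN x : center x <-> commute x (- x).
Proof. by split=> [cx | cxN]; [exact: cx | exact/centerP/lamN_of_commute]. Qed.

Lemma center_subspace : linear_subspace center.
Proof.
split=> [|x y cx cy z | a x cx z]; first by apply/centerP; rewrite oppr0 lam0 oppr0.
  exact: commutantD.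
have [a_ge0 | a_lt0] := leP 0 a; first exact: commutantZ.
rewrite -[a]opprK scaleNr -scalerN; apply: commutantZ; first by rewrite oppr_ge0 ltW.
by apply: (@center_of_lamN (- x) x); apply/centerP.
Qed.

Lemma center_closed : closed_set ipV center.
Proof. exact: closed_set_bigcap commutant_closed. Qed.

Lemma lam_linear_on_center : linear_on lam center.
Proof.
move=> a b x y cx cy; have [_ centerD centerZ] := center_subspace.
have cu := centerD _ _ (centerZ a x cx) (centerZ b y cy).
set u := a *: x + b *: y in cu *; set d := lam u - (a *: lam x + b *: lam y).
have d_perp c : center c -> ipW d (lam c) = 0.
  move=> cc; rewrite (ipC hW) /d (ipBr hW) (ipDr hW) !(ipZr hW) -(cc u) -(cc x) -(cc y).
  by rewrite /u (ipDr hV) !(ipZr hV) subrr.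
apply/eqP; rewrite -subr_eq0; apply/eqP; apply: (ip_le0_eq0 hW).
by rewrite -/d {2}/d (ipBr hW) (ipDr hW) !(ipZr hW) !d_perp // !mulr0 addr0 subr0.
Qed.

End FTvNSystem.

Theorem proposition6p2 (R : realType) (V W : lmodType R)
  (ipV : V -> V -> R) (ipW : W -> W -> R) (lam : V -> W)
  (hV : is_inner_product ipV) (hW : is_inner_product ipW)
  (hF : FTvN_system ipV ipW lam) :
  [/\ (* (a) *)
      (forall x : V, closed_set ipV (commutant ipV ipW lam x) /\
                     convex_cone (commutant ipV ipW lam x) /\
                     (forall y, (lam_orbit lam x y /\ commutant ipV ipW lam x y) <-> y = x)),
      (* (b) *)
      (forall x y : V, lam x = - lam y ->
         [/\ x = - y, center ipV ipW lam x & center ipV ipW lam y]),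
      (* (c) *)
      [/\ linear_subspace (center ipV ipW lam),
          closed_set ipV (center ipV ipW lam) &
          linear_on lam (center ipV ipW lam)],
      (* (d) *)
      (forall x : V, center ipV ipW lam x <-> lam (- x) = - lam x) &
      (* (e) *)
      ((forall x : V, lam_commute ipV ipW lam x (- x) -> center ipV ipW lam x) /\
       (forall x : V, center ipV ipW lam x <-> lam_commute ipV ipW lam x (- x)))].
Proof.
split.
- move=> x; split; first exact: commutant_closed.
  by split; [exact: commutant_convex_cone | exact: orbit_commutant].
- move=> x y lam_xy.
  split; [exact: eq_oppr_of_lam hV hW hF _ _ lam_xy |
          exact: center_of_lamN hV hW hF _ _ lam_xy |].
  by apply: (center_of_lamN hV hW hF (y := x)); rewrite lam_xy opprK.
- split; [exact: center_subspace | exact: center_closed | exact: lam_linear_on_center].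
- exact: centerP.
- by split=> x; [move/(center_commuteN hV hW hF) | exact: center_commuteN].
Qed.
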